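(* Let $G$ be a graph and let $A$ and $B$ be disjoint subsets of $V(G)$ such that every vertex of $A$ is adjacent in $G$ to every vertex of $B$. Let $P_A$ be a path in $G[A]$ and $P_B$ a path in $G[B]$, both non-empty. If \[|B\setminus V(P_B)|\le |A\setminus V(P_A)|\le |B|-1,\] then $G[A\cup B]$ has a cycle whose vertex set is $A\cup B$.
   Context: Paths may consist of a single vertex. A single vertex and a single edge are also considered to be cycles. *)

(* A (finite, simple) graph G is a symmetric irreflexive
   relation e on a finType T. *)
From mathcomp Require Import all_boot.
Set Implicit Arguments. Unset Strict Implicit. Unset Printing Implicit Defensive.

Definition is_path (T : eqType) (e : rel T) (p : seq T) : bool :=
  match p with
  | [::] => false
  | x :: q => path e x q && uniq p
  end.

(* By convention a single
   vertex and a single edge are also cycles (for [:: x; y], [cycle e] just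
   asks e x y && e y x). *)
Definition is_cycle (T : eqType) (e : rel T) (c : seq T) : bool :=
  uniq c && ((size c == 1) || ((1 < size c) && cycle e c)).

(* Follow P_A, then the first m := |B| - |A \ V(P_A)| vertices of P_B, and
   then alternate between the remaining vertices of A and those of B: there
   are exactly as many left in each part.  The hypotheses say precisely that
   1 <= m <= |V(P_B)|, and since every A-vertex is adjacent to every B-vertex,
   every junction of the resulting sequence, including the closing edge back
   to the start of P_A, is an edge. *)
From mathcomp Require Import all_boot zify.
Set Implicit Arguments. Unset Strict Implicit. Unset Printing Implicit Defensive.

Definition interleave (T : Type) (xs ys : seq T) : seq T :=
  flatten [seq [:: z.1; z.2] | z <- zip xs ys].

Section Interleave.

Variable T : eqType.

Lemma interleave_cons (x y : T) (xs ys : seq T) :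
  interleave (x :: xs) (y :: ys) = x :: y :: interleave xs ys.
Proof. by []. Qed.

Lemma perm_interleave (xs ys : seq T) :
  size xs = size ys -> perm_eq (interleave xs ys) (xs ++ ys).
Proof.
elim: xs ys => [|x xs IH] [|y ys] // [/IH eq_perm].
rewrite interleave_cons perm_cons perm_sym -(cat1s y ys) perm_catCA.
by rewrite perm_cons perm_sym.
Qed.

Lemma last_interleave (z : T) (xs ys : seq T) :
  size xs = size ys -> last z (interleave xs ys) = last z ys.
Proof.
by elim: xs ys z => [|x xs IH] [|y ys] z // [eq_size]; rewrite interleave_cons /= IH.
Qed.

Lemma path_interleave (e : rel T) (e_sym : symmetric e) (inA inB : pred T)
    (eAB : forall a b, inA a -> inB b -> e a b) (z : T) (xs ys : seq T) :
  inB z -> {subset xs <= inA} -> {subset ys <= inB} -> size xs = size ys ->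
  path e z (interleave xs ys).
Proof.
elim: xs ys z => [|x xs IH] [|y ys] z // Bz sxs sys [eq_size].
have Ax := sxs x (mem_head _ _); have By := sys y (mem_head _ _).
rewrite interleave_cons /= e_sym !eAB //= IH // => [w wxs|w wys].
- by apply: sxs; rewrite inE wxs orbT.
- by apply: sys; rewrite inE wys orbT.
Qed.

Lemma perm_take_interleave (m : nat) (xs s : seq T) :
  size xs = size (drop m s) ->
  perm_eq (take m s ++ interleave xs (drop m s)) (xs ++ s).
Proof.
move=> /perm_interleave eq_perm.
rewrite -[in X in perm_eq _ X](cat_take_drop m s).
by rewrite perm_sym perm_catCA perm_cat2l perm_sym.
Qed.

Lemma cycle_cat_interleave (e : rel T) (e_sym : symmetric e)
    (inA inB : pred T) (eAB : forall a b, inA a -> inB b -> e a b)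
    (a b : T) (p q xs ys : seq T) :
  path e a p -> {subset a :: p <= inA} ->
  path e b q -> {subset b :: q <= inB} ->
  {subset xs <= inA} -> {subset ys <= inB} -> size xs = size ys ->
  cycle e ((a :: p) ++ (b :: q) ++ interleave xs ys).
Proof.
move=> pp sp pq sq sxs sys eq_size.
have eBA c d : inA c -> inB d -> e d c by move=> Ac Bd; rewrite e_sym eAB.
have lastB : inB (last (last b q) ys).
  rewrite -last_cat; have := mem_last b (q ++ ys).
  by rewrite -cat_cons mem_cat => /orP[/sq|/sys].
rewrite /cycle /= rcons_cat cat_path pp /= rcons_cat cat_path pq rcons_path.
have Aa : inA a := sp a (mem_head a p).
have Alast : inA (last a p) := sp _ (mem_last a p).
have Bb : inB b := sq b (mem_head b q).
have Blast : inB (last b q) := sq _ (mem_last b q).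
by rewrite last_interleave // eAB // eBA // (path_interleave e_sym eAB).
Qed.

End Interleave.

Definition extend_seq (T : finType) (A : {set T}) (p : seq T) : seq T :=
  p ++ enum (A :\: [set x in p]).

Section ExtendSeq.

Variables (T : finType) (A : {set T}) (p : seq T).
Hypotheses (p_uniq : uniq p) (pA : {subset p <= A}).

Lemma extend_seq_uniq : uniq (extend_seq A p).
Proof.
rewrite cat_uniq p_uniq enum_uniq andbT; apply/hasPn => x.
by rewrite mem_enum !inE => /andP[].
Qed.

Lemma mem_extend_seq : extend_seq A p =i A.
Proof.
move=> x; rewrite mem_cat mem_enum !inE.
by case: (boolP (x \in p)) => [/pA|].
Qed.

Lemma size_extend_seq : size (extend_seq A p) = #|A|.
Proof. by rewrite -(card_uniqP extend_seq_uniq); exact: eq_card mem_extend_seq. Qed.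

End ExtendSeq.

Lemma disjoint_uniq_cat (T : finType) (A B : {set T}) (s1 s2 : seq T) :
  [disjoint A & B] -> s1 =i A -> s2 =i B -> uniq s1 -> uniq s2 -> uniq (s1 ++ s2).
Proof.
move=> dAB s1A s2B u1 u2; rewrite cat_uniq u1 u2 andbT; apply/hasPn=> x.
rewrite s2B => xB; apply/negP=> xs1; have xA : x \in A by rewrite -s1A.
by move: (disjointFr dAB xA); rewrite xB.
Qed.

Lemma cycle_is_cycle (T : eqType) (e : rel T) (c : seq T) :
  uniq c -> 1 < size c -> cycle e c -> is_cycle e c.
Proof. by rewrite /is_cycle => -> -> ->; rewrite orbT. Qed.

Theorem lemma3p3 (T : finType) (e : rel T)
    (e_sym : symmetric e) (e_irr : irreflexive e)
    (A B : {set T})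
    (hAB : [disjoint A & B])
    (hcomplete : forall a b, a \in A -> b \in B -> e a b)
    (PA PB : seq T)
    (hPA : is_path e PA) (hPAin : {subset PA <= A})
    (hPB : is_path e PB) (hPBin : {subset PB <= B})
    (h1 : #|B :\: [set x in PB]| <= #|A :\: [set x in PA]|)
    (h2 : #|A :\: [set x in PA]| <= #|B| - 1) :
  exists c : seq T, is_cycle e c /\ {subset c <= A :|: B} /\ [set x in c] = A :|: B.
Proof.
case: PA hPA hPAin h1 h2 => [|a pa] // /andP[pa_path pa_uniq] paA.
case: PB hPB hPBin => [|b pb] // /andP[pb_path pb_uniq] pbB h1 h2.
set xs := enum (A :\: [set x in a :: pa]); set sB := extend_seq B (b :: pb).
have size_xs : size xs = #|A :\: [set x in a :: pa]| by rewrite cardE.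
have size_sB : (size pb).+1 + #|B :\: [set x in b :: pb]| = #|B|.
  by rewrite -(size_extend_seq pb_uniq pbB) size_cat cardE.
set m := #|B| - size xs.
have m_gt0 : 0 < m by rewrite /m; lia.
have take_sB : take m sB = b :: take m.-1 pb.
  rewrite takel_cat; last by rewrite /m /=; lia.
  by rewrite -[in take m _](prednK m_gt0).
have size_drop_sB : size xs = size (drop m sB).
  by rewrite size_drop size_extend_seq // /m; lia.
set c := (a :: pa) ++ take m sB ++ interleave xs (drop m sB).
have perm_c : perm_eq c (extend_seq A (a :: pa) ++ sB).
  by rewrite /c /extend_seq -catA perm_cat2l perm_take_interleave.
have mem_c : c =i A :|: B.
  by move=> x; rewrite (perm_mem perm_c) mem_cat !mem_extend_seq // inE.
exists c; split; last first.
  by split=> [x|]; [rewrite mem_c | apply/setP=> x; rewrite inE mem_c].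
apply: cycle_is_cycle.
- rewrite (perm_uniq perm_c).
  by apply: (disjoint_uniq_cat hAB (mem_extend_seq paA) (mem_extend_seq pbB));
    apply: extend_seq_uniq.
- by rewrite /c take_sB size_cat /= addnS.
rewrite /c take_sB.
apply: (cycle_cat_interleave e_sym (inA := [in A]) (inB := [in B])) => //.
- exact: take_path.
- by move=> x; rewrite -take_sB => /mem_take; rewrite mem_extend_seq.
- by move=> x; rewrite mem_enum inE => /andP[].
- by move=> x /mem_drop; rewrite mem_extend_seq.
Qed.
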